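(* Let $T>0$ and let $\mathbf{v}=(v^1,v^2,v^3):[0,\infty)\times[0,T]\to\mathbb{R}^3$ be a smooth solution (all derivatives continuous up to $s=0$) of the initial-boundary value problem \[ \mathbf{v}_t=\mathbf{v}\times\mathbf{v}_{ss}\ (s>0,\ t>0),\qquad \mathbf{v}(s,0)=\mathbf{v}_0(s)\ (s>0),\qquad \mathbf{v}(0,t)=\mathbf{e}_3\ (t>0), \] where $\mathbf{e}_3=(0,0,1)$ and the initial datum satisfies $|\mathbf{v}_0(s)|=1$ for all $s\ge 0$. Then for every $n\in\mathbb{N}=\{1,2,\dots\}$ and every $t\in(0,T]$: \[ (C)_n:\quad \bigl(\mathbf{v}\times\partial_s^{2n}\mathbf{v}\bigr)\big|_{s=0}=\mathbf{0}, \] \[ (D)_n:\quad \bigl(\partial_s^{j}\mathbf{v}\cdot\partial_s^{l}\mathbf{v}\bigr)\big|_{s=0}=0\quad\text{for all nonnegative integers } j,l \text{ with } j+l=2n+1. \]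
   Context: $\times$ denotes the exterior (cross) product in $\mathbb{R}^3$ and $\cdot$ the Euclidean inner product; $|_{s=0}$ denotes the trace at $s=0$. *)

From Stdlib Require Import Reals.
From Coquelicot Require Import Coquelicot.
Open Scope R_scope.

Definition vec := (R * R * R)%type.
Definition vcomp (i : nat) (x : vec) : R :=
  match i with 0%nat => fst (fst x) | 1%nat => snd (fst x) | _ => snd x end.
Definition cross (a b : vec) : vec :=
  let '(a1, a2, a3) := a in let '(b1, b2, b3) := b in
  (a2 * b3 - a3 * b2, a3 * b1 - a1 * b3, a1 * b2 - a2 * b1).
Definition dot (a b : vec) : R :=
  let '(a1, a2, a3) := a in let '(b1, b2, b3) := b in a1 * b1 + a2 * b2 + a3 * b3.
Definition vnorm (a : vec) : R := sqrt (dot a a).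
Definition e3 : vec := (0, 0, 1).
Definition vzero : vec := (0, 0, 0).

Definition ds (f : R -> R -> R) : R -> R -> R := fun s t => Derive (fun x => f x t) s.
Definition dt (f : R -> R -> R) : R -> R -> R := fun s t => Derive (fun y => f s y) t.
Definition dsn (j : nat) (f : R -> R -> R) : R -> R -> R := Nat.iter j ds f.
Definition dtn (k : nat) (f : R -> R -> R) : R -> R -> R := Nat.iter k dt f.

Definition vfc (i : nat) (v : R -> R -> vec) : R -> R -> R := fun s t => vcomp i (v s t).
Definition Dsn (j : nat) (v : R -> R -> vec) : R -> R -> vec :=
  fun s t => (dsn j (vfc 0 v) s t, dsn j (vfc 1 v) s t, dsn j (vfc 2 v) s t).

Definition openQ (T : R) (p : R * R) : Prop := 0 < fst p /\ 0 < snd p < T.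
Definition closedQ (T : R) (p : R * R) : Prop := 0 <= fst p /\ 0 <= snd p <= T.

Definition cont_on_closedQ (T : R) (g : R -> R -> R) : Prop :=
  forall p, closedQ T p ->
    filterlim (fun q : R * R => g (fst q) (snd q)) (within (closedQ T) (locally p))
      (locally (g (fst p) (snd p))).

(* v is smooth on [0,oo) x [0,T], all derivatives continuous up to the boundary:
   v is continuous on the closed region; in the open region all partial
   derivatives d_s^j d_t^k v exist (t-derivatives first, then s-derivatives)
   and are jointly continuous; and each of them extends continuously to the
   closed region.  (By Schwarz, this is C^oo in the interior.) *)
Definition smooth_up_to_boundary (T : R) (v : R -> R -> vec) : Prop :=
  (forall i : nat, (i < 3)%nat -> cont_on_closedQ T (vfc i v)) /\
  (forall (i j k : nat), (i < 3)%nat -> forall s t, openQ T (s, t) ->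
     ex_derive (fun x => dsn j (dtn k (vfc i v)) x t) s /\
     ex_derive (fun y => dtn k (vfc i v) s y) t /\
     filterlim (fun q : R * R => dsn j (dtn k (vfc i v)) (fst q) (snd q))
       (locally (s, t)) (locally (dsn j (dtn k (vfc i v)) s t))) /\
  (forall (i j k : nat), (i < 3)%nat -> exists g : R -> R -> R,
     cont_on_closedQ T g /\
     forall s t, openQ T (s, t) -> g s t = dsn j (dtn k (vfc i v)) s t).

(* Trace at s = 0 of a scalar function of s (t fixed): right limit at 0. *)
Definition trace0_is (f : R -> R) (l : R) : Prop :=
  filterlim f (at_right 0) (locally l).

(* Write a_m(t) for the trace at s = 0 of d_s^m v(., t).  By induction on m, a_m is vertical
   (parallel to e3) for even m and horizontal for odd m; a_0 = e3 is the boundary condition.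
   For odd m, the m-th s-derivative of |v|^2 = 1 traced at s = 0 gives
   sum_j C(m,j) a_j . a_(m-j) = 0, in which every term except 2 a_0 . a_m cancels by parity.
   For even m = m' + 2, the horizontal part of a_m' vanishes for all t, hence so does its time
   derivative; by the equation that derivative is sum_j C(m',j) a_j x a_(m'-j+2), whose
   horizontal part reduces by parity to e3 x a_m.  (C)_n and (D)_n are then parity statements
   about a_0 x a_2n and a_j . a_l.  The analytic work consists in exchanging traces (at s = 0,
   and at the final time t = T) with derivatives, using only the continuous extensions of the
   derivatives provided by the smoothness hypothesis. *)

From Stdlib Require Import Reals Lra Lia Arith IndefiniteDescription.
From Coquelicot Require Import Coquelicot.
Open Scope R_scope.

Section RealLimits.

Context {U : Type} {F : (U -> Prop) -> Prop} {FF : Filter F}.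

Lemma lim_const (a : R) : filterlim (fun _ => a) F (locally a).
Proof. apply filterlim_const. Qed.

Lemma lim_plus f g a b : filterlim f F (locally a) -> filterlim g F (locally b) ->
  filterlim (fun z => f z + g z) F (locally (a + b)).
Proof. intros Hf Hg. exact (filterlim_comp_2 _ _ Rplus Hf Hg (@filterlim_plus R_AbsRing R_NormedModule a b)). Qed.

Lemma lim_mult f g a b : filterlim f F (locally a) -> filterlim g F (locally b) ->
  filterlim (fun z => f z * g z) F (locally (a * b)).
Proof. intros Hf Hg. exact (filterlim_comp_2 _ _ Rmult Hf Hg (@filterlim_mult R_AbsRing a b)). Qed.

Lemma lim_minus f g a b : filterlim f F (locally a) -> filterlim g F (locally b) ->
  filterlim (fun z => f z - g z) F (locally (a - b)).
Proof.
  intros Hf Hg. apply lim_plus; [exact Hf |].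
  replace (- b) with (-1 * b) by ring.
  apply (filterlim_ext (fun z => -1 * g z)); [intros; ring |].
  apply lim_mult; [apply lim_const | exact Hg].
Qed.

Lemma lim_sum (f : nat -> U -> R) (a : nat -> R) n :
  (forall j, (j <= n)%nat -> filterlim (f j) F (locally (a j))) ->
  filterlim (fun z => sum_f_R0 (fun j => f j z) n) F (locally (sum_f_R0 a n)).
Proof.
  induction n as [|n IH]; intros H; simpl.
  - apply H; lia.
  - apply lim_plus; [apply IH; intros; apply H | apply H]; lia.
Qed.

End RealLimits.

Lemma lim_unique_ext {U} (F : (U -> Prop) -> Prop) {FF : ProperFilter F} (f g : U -> R) a b :
  filterlim f F (locally a) -> filterlim g F (locally b) -> F (fun z => f z = g z) -> a = b.
Proof.
  intros Hf Hg E. apply (@filterlim_locally_unique _ R_AbsRing R_NormedModule F (Proper_StrongProper _ FF) f).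
  - exact Hf.
  - apply (filterlim_ext_loc g); [| exact Hg].
    apply (filter_imp (fun z => f z = g z)); [intros z Hz; symmetry; exact Hz | exact E].
Qed.

Lemma at_right_0_interval d : 0 < d -> at_right 0 (fun s => 0 < s < d).
Proof.
  intros Hd. exists (mkposreal d Hd). intros s Hs Hpos.
  change (Rabs (s - 0) < d) in Hs. rewrite Rminus_0_r, Rabs_right in Hs; lra.
Qed.

Lemma at_left_interval T d : 0 < T -> 0 < d -> at_left T (fun t => 0 < t < T /\ T - d < t).
Proof.
  intros HT Hd. assert (Hm : 0 < Rmin d T) by (apply Rmin_pos; lra).
  exists (mkposreal _ Hm). intros t Ht Hlt. simpl in Ht.
  change (Rabs (t - T) < Rmin d T) in Ht. rewrite Rabs_left in Ht by lra.
  pose proof (Rmin_l d T). pose proof (Rmin_r d T). lra.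
Qed.

Lemma locally_pos x : 0 < x -> locally x (fun y => 0 < y).
Proof. apply open_gt. Qed.

Lemma locally_interval lo hi t : lo < t < hi -> locally t (fun y => lo < y < hi).
Proof. intros Ht. apply (open_and _ _ (open_gt lo) (open_lt hi)), Ht. Qed.

Lemma between_interval lo hi a b z : lo < a < hi -> lo < b < hi ->
  Rmin a b <= z <= Rmax a b -> lo < z < hi.
Proof. unfold Rmin, Rmax. destruct (Rle_dec a b); lra. Qed.

Lemma between_dist a b u : Rmin a b <= u <= Rmax a b -> Rabs (u - a) <= Rabs (b - a).
Proof. unfold Rmin, Rmax, Rabs. destruct (Rle_dec a b), (Rcase_abs (u - a)), (Rcase_abs (b - a)); lra. Qed.

Lemma trace0_is_ext F G a : (forall s, 0 < s -> F s = G s) -> trace0_is F a -> trace0_is G a.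
Proof.
  intros E. apply filterlim_ext_loc.
  apply (filter_imp (fun s => 0 < s < 1)); [intros s Hs; apply E; lra | apply at_right_0_interval; lra].
Qed.

Lemma trace0_is_unique F a b : trace0_is F a -> trace0_is F b -> a = b.
Proof.
  apply (@filterlim_locally_unique _ R_AbsRing R_NormedModule).
  apply Proper_StrongProper, at_right_proper_filter.
Qed.

Lemma vcomp_cross i : (i < 3)%nat -> exists p q, (p < 3)%nat /\ (q < 3)%nat /\
  forall a b, vcomp i (cross a b) = vcomp p a * vcomp q b - vcomp q a * vcomp p b.
Proof.
  intros Hi. destruct i as [|[|[|i]]]; [exists 1%nat, 2%nat | exists 2%nat, 0%nat | exists 0%nat, 1%nat | lia];
    (split; [lia | split; [lia |]]); intros [[a1 a2] a3] [[b1 b2] b3]; reflexivity.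
Qed.

Lemma dot_vcomp a b : dot a b = vcomp 0 a * vcomp 0 b + vcomp 1 a * vcomp 1 b + vcomp 2 a * vcomp 2 b.
Proof. destruct a as [[a1 a2] a3], b as [[b1 b2] b3]; reflexivity. Qed.

Lemma dot_cross_l a b : dot a (cross a b) = 0.
Proof. destruct a as [[a1 a2] a3], b as [[b1 b2] b3]; simpl; ring. Qed.

Lemma cross_e3_horizontal a : vcomp 0 a = 0 -> vcomp 1 a = 0 -> cross e3 a = vzero.
Proof. destruct a as [[a1 a2] a3]; simpl; intros -> ->; unfold vzero; f_equal; try f_equal; ring. Qed.

Lemma vcomp_vzero i : vcomp i vzero = 0.
Proof. destruct i as [|[|i]]; reflexivity. Qed.

Lemma dot_self_of_vnorm a : vnorm a = 1 -> dot a a = 1.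
Proof.
  unfold vnorm. intros H.
  assert (Hge : 0 <= dot a a) by (destruct a as [[a1 a2] a3]; simpl; nra).
  rewrite <- (sqrt_sqrt _ Hge), H. ring.
Qed.

Lemma vcomp_Dsn j (v : R -> R -> vec) s t p : (p < 3)%nat -> vcomp p (Dsn j v s t) = dsn j (vfc p v) s t.
Proof. intros Hp. destruct p as [|[|[|p]]]; [reflexivity | reflexivity | reflexivity | lia]. Qed.

Lemma Dsn_0 (v : R -> R -> vec) s t : Dsn 0 v s t = v s t.
Proof. unfold Dsn, dsn, vfc. simpl. destruct (v s t) as [[a b] c]. reflexivity. Qed.

Definition vtrace0_is (F : R -> vec) (a : vec) : Prop :=
  forall p, (p < 3)%nat -> trace0_is (fun s => vcomp p (F s)) (vcomp p a).

Lemma vtrace0_is_cross F G a b : vtrace0_is F a -> vtrace0_is G b ->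
  vtrace0_is (fun s => cross (F s) (G s)) (cross a b).
Proof.
  intros HF HG i Hi. destruct (vcomp_cross i Hi) as [p [q [Hp [Hq E]]]].
  rewrite E. apply (trace0_is_ext (fun s => vcomp p (F s) * vcomp q (G s) - vcomp q (F s) * vcomp p (G s))).
  - intros s _. rewrite E. reflexivity.
  - apply lim_minus; apply lim_mult; [apply HF | apply HG | apply HF | apply HG]; assumption.
Qed.

Lemma vtrace0_is_dot F G a b : vtrace0_is F a -> vtrace0_is G b ->
  trace0_is (fun s => dot (F s) (G s)) (dot a b).
Proof.
  intros HF HG. rewrite dot_vcomp.
  apply (trace0_is_ext (fun s => vcomp 0 (F s) * vcomp 0 (G s) + vcomp 1 (F s) * vcomp 1 (G s)
    + vcomp 2 (F s) * vcomp 2 (G s))); [intros; rewrite dot_vcomp; reflexivity |].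
  apply lim_plus; [apply lim_plus |]; apply lim_mult;
    [apply HF | apply HG | apply HF | apply HG | apply HF | apply HG]; lia.
Qed.

Definition parity_vec (m : nat) (a : vec) : Prop :=
  if Nat.even m then vcomp 0 a = 0 /\ vcomp 1 a = 0 else vcomp 2 a = 0.

Lemma dot_parity_vec j l a b : parity_vec j a -> parity_vec l b ->
  Nat.even (j + l) = false -> dot a b = 0.
Proof.
  unfold parity_vec. rewrite Nat.even_add. rewrite dot_vcomp.
  destruct (Nat.even j), (Nat.even l); simpl; try discriminate.
  - intros [-> ->] -> _. ring.
  - intros -> [-> ->] _. ring.
Qed.

Lemma cross_parity_vec j l a b : parity_vec j a -> parity_vec l b ->
  Nat.even (j + l) = true -> vcomp 0 (cross a b) = 0 /\ vcomp 1 (cross a b) = 0.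
Proof.
  unfold parity_vec. rewrite Nat.even_add. destruct a as [[a1 a2] a3], b as [[b1 b2] b3]. simpl.
  destruct (Nat.even j), (Nat.even l); simpl; try discriminate.
  - intros [-> ->] [-> ->] _. split; ring.
  - intros -> -> _. split; ring.
Qed.

Lemma sum_f_R0_ends (a : nat -> R) n : (0 < n)%nat ->
  (forall j, (0 < j < n)%nat -> a j = 0) -> sum_f_R0 a n = a 0%nat + a n.
Proof.
  induction n as [|n IH]; intros Hn H; [lia |]. destruct n as [|n]; [reflexivity |].
  rewrite tech5, IH, (H (S n)) by (lia || (intros; apply H; lia)). ring.
Qed.

Lemma sum_f_R0_first (a : nat -> R) n :
  (forall j, (0 < j <= n)%nat -> a j = 0) -> sum_f_R0 a n = a 0%nat.
Proof.
  induction n as [|n IH]; intros H; [reflexivity |].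
  rewrite tech5, IH, (H (S n)) by (lia || (intros; apply H; lia)). ring.
Qed.

Lemma is_derive_Rplus f g x df dg :
  is_derive f x df -> is_derive g x dg -> is_derive (fun y => f y + g y) x (df + dg).
Proof. intros Hf Hg. apply is_derive_Reals, derivable_pt_lim_plus; apply is_derive_Reals; assumption. Qed.

Lemma is_derive_Rmult f g x df dg :
  is_derive f x df -> is_derive g x dg -> is_derive (fun y => f y * g y) x (df * g x + f x * dg).
Proof. intros Hf Hg. apply is_derive_Reals, derivable_pt_lim_mult; apply is_derive_Reals; assumption. Qed.

Lemma is_derive_sum_f_R0 (f : nat -> R -> R) (df : nat -> R) n x :
  (forall j, (j <= n)%nat -> is_derive (f j) x (df j)) ->
  is_derive (fun y => sum_f_R0 (fun j => f j y) n) x (sum_f_R0 df n).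
Proof.
  induction n as [|n IH]; intros H; simpl.
  - apply H; lia.
  - apply is_derive_Rplus; [apply IH; intros; apply H | apply H]; lia.
Qed.

Lemma is_derive_dot_self (w : R -> vec) (dw : vec) y :
  (forall p, (p < 3)%nat -> is_derive (fun z => vcomp p (w z)) y (vcomp p dw)) ->
  is_derive (fun z => dot (w z) (w z)) y (2 * dot (w y) dw).
Proof.
  intros H.
  apply (is_derive_ext (fun z => vcomp 0 (w z) * vcomp 0 (w z) + vcomp 1 (w z) * vcomp 1 (w z)
    + vcomp 2 (w z) * vcomp 2 (w z))); [intros; rewrite dot_vcomp; reflexivity |].
  replace (2 * dot (w y) dw) with
    (vcomp 0 dw * vcomp 0 (w y) + vcomp 0 (w y) * vcomp 0 dw
     + (vcomp 1 dw * vcomp 1 (w y) + vcomp 1 (w y) * vcomp 1 dw)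
     + (vcomp 2 dw * vcomp 2 (w y) + vcomp 2 (w y) * vcomp 2 dw)) by (rewrite dot_vcomp; ring).
  pose proof (fun p Hp => is_derive_Rmult _ _ y _ _ (H p Hp) (H p Hp)) as Hsq.
  apply is_derive_Rplus; [apply is_derive_Rplus |]; apply Hsq; lia.
Qed.

Lemma is_derive_zero_const (F : R -> R) a b y1 y2 :
  (forall y, a < y < b -> is_derive F y 0) -> a < y1 < b -> a < y2 < b -> F y1 = F y2.
Proof.
  intros Hd H1 H2. pose proof (fun z => between_interval a b y1 y2 z H1 H2) as Hb.
  destruct (MVT_gen F y1 y2 (fun _ => 0)) as [c [_ E]].
  - intros z Hz. apply Hd, Hb. lra.
  - intros z Hz. apply continuity_pt_filterlim, (ex_derive_continuous (K := R_AbsRing) (V := R_NormedModule)).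
    exists 0. apply Hd, Hb, Hz.
  - lra.
Qed.

Lemma mvt_increment_bound (f df : R -> R) x h c e :
  (forall u, Rabs (u - x) <= Rabs h -> is_derive f u (df u)) ->
  (forall u, Rabs (u - x) <= Rabs h -> Rabs (df u - c) <= e) ->
  Rabs (f (x + h) - f x - h * c) <= Rabs h * e.
Proof.
  intros Hd Hb.
  assert (Hu : forall u, Rmin x (x + h) <= u <= Rmax x (x + h) -> Rabs (u - x) <= Rabs h).
  { intros u Hu. pose proof (between_dist _ _ _ Hu) as B. replace (x + h - x) with h in B by ring. exact B. }
  destruct (MVT_gen f x (x + h) df) as [u [Hu1 E]].
  - intros u Hu1. apply Hd, Hu; lra.
  - intros u Hu1. apply continuity_pt_filterlim, (ex_derive_continuous (K := R_AbsRing) (V := R_NormedModule)).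
    exists (df u). apply Hd, Hu, Hu1.
  - rewrite E. replace (df u * (x + h - x) - h * c) with (h * (df u - c)) by ring.
    rewrite Rabs_mult. apply Rmult_le_compat_l; [apply Rabs_pos | apply Hb, Hu, Hu1].
Qed.

(* Differentiation in [u] commutes with the limit [y -> F] as soon as the derivatives
   converge locally uniformly: a mean-value estimate at fixed [y] passes to the limit. *)
Lemma is_derive_limit (F : (R -> Prop) -> Prop) {FF : ProperFilter F} (f0 f1 : R -> R -> R) x y0 r :
  0 < r ->
  (forall u, Rabs (u - x) < r -> filterlim (fun y => f0 u y) F (locally (f0 u y0))) ->
  F (fun y => forall u, Rabs (u - x) < r -> is_derive (fun w => f0 w y) u (f1 u y)) ->
  (forall eps, 0 < eps -> exists d, 0 < d /\
     F (fun y => forall u, Rabs (u - x) < d -> Rabs (f1 u y - f1 x y0) < eps)) ->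
  is_derive (fun u => f0 u y0) x (f1 x y0).
Proof.
  intros Hr Hlim Hder Hunif. apply is_derive_Reals. intros eps Heps.
  destruct (Hunif (eps / 2)) as [d [Hd Hu]]; [lra |].
  assert (Hdel : 0 < Rmin d r) by (apply Rmin_pos; lra).
  exists (mkposreal _ Hdel). intros h Hh0 Hh. simpl in Hh.
  pose proof (Rmin_l d r). pose proof (Rmin_r d r).
  set (K := Rabs h * (eps / 2)).
  assert (Hinc : - K <= f0 (x + h) y0 - f0 x y0 - h * f1 x y0 <= K).
  { apply (@closed_filterlim_loc R R_UniformSpace F (Proper_StrongProper _ FF)
      (fun y => f0 (x + h) y - f0 x y - h * f1 x y0) (fun z => - K <= z <= K)).
    - apply lim_minus; [apply lim_minus; apply Hlim | apply lim_const].
      + replace (x + h - x) with h by ring. lra.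
      + rewrite Rminus_diag, Rabs_R0. exact Hr.
    - apply (filter_imp (fun y => (forall u, Rabs (u - x) < r -> is_derive (fun w => f0 w y) u (f1 u y))
        /\ (forall u, Rabs (u - x) < d -> Rabs (f1 u y - f1 x y0) < eps / 2)));
        [| apply filter_and; assumption].
      intros y [Hy1 Hy2]. apply Rabs_le_between, (mvt_increment_bound (fun w => f0 w y) (fun w => f1 w y)).
      + intros u Hux. apply Hy1. lra.
      + intros u Hux. left. apply Hy2. lra.
    - apply closed_and; [apply closed_ge | apply closed_le]. }
  assert (Hh1 : 0 < Rabs h) by (apply Rabs_pos_lt, Hh0).
  replace ((f0 (x + h) y0 - f0 x y0) / h - f1 x y0)
    with ((f0 (x + h) y0 - f0 x y0 - h * f1 x y0) / h) by (field; exact Hh0).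
  unfold Rdiv. rewrite Rabs_mult, Rabs_inv.
  apply (Rle_lt_trans _ (K * / Rabs h)).
  - apply Rmult_le_compat_r; [left; apply Rinv_0_lt_compat, Hh1 | apply Rabs_le_between, Hinc].
  - unfold K. replace (Rabs h * (eps / 2) * / Rabs h) with (eps / 2) by (field; lra). lra.
Qed.

Definition smooth_pos (F : R -> R) : Prop := forall j x, 0 < x -> ex_derive (Derive_n F j) x.

Lemma smooth_pos_locally F n x : smooth_pos F -> 0 < x ->
  locally x (fun y => forall k, (k <= n)%nat -> ex_derive_n F k y).
Proof.
  intros HF Hx. apply (filter_imp (fun y => 0 < y)); [| apply locally_pos, Hx].
  intros y Hy [|k] _; simpl; auto.
Qed.

Lemma smooth_pos_Derive_n F k : smooth_pos F -> smooth_pos (Derive_n F k).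
Proof.
  intros HF j x Hx. apply (ex_derive_ext (Derive_n F (j + k))).
  - intros y. symmetry. apply Derive_n_comp.
  - apply HF, Hx.
Qed.

Lemma Derive_n_plus_pos F G n x : smooth_pos F -> smooth_pos G -> 0 < x ->
  Derive_n (fun y => F y + G y) n x = Derive_n F n x + Derive_n G n x.
Proof. intros; apply Derive_n_plus; apply smooth_pos_locally; auto. Qed.

Lemma Derive_n_minus_pos F G n x : smooth_pos F -> smooth_pos G -> 0 < x ->
  Derive_n (fun y => F y - G y) n x = Derive_n F n x - Derive_n G n x.
Proof. intros; apply Derive_n_minus; apply smooth_pos_locally; auto. Qed.

Lemma smooth_pos_plus F G : smooth_pos F -> smooth_pos G -> smooth_pos (fun y => F y + G y).
Proof.
  intros HF HG j x Hx. apply (ex_derive_ext_loc (fun y => Derive_n F j y + Derive_n G j y)).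
  - apply (filter_imp (fun y => 0 < y)); [| apply locally_pos, Hx].
    intros y Hy. symmetry. apply Derive_n_plus_pos; auto.
  - apply (ex_derive_plus (Derive_n F j) (Derive_n G j)); auto.
Qed.

Fixpoint binom (m j : nat) : R :=
  match m with
  | O => match j with O => 1 | _ => 0 end
  | S m' => binom m' j + match j with O => 0 | S j' => binom m' j' end
  end.

Lemma binom_gt m j : (m < j)%nat -> binom m j = 0.
Proof.
  revert j; induction m as [|m IH]; intros [|j] H; simpl; try lia; try reflexivity.
  rewrite !IH by lia. ring.
Qed.

Lemma binom_0 m : binom m 0 = 1.
Proof. induction m as [|m IH]; simpl; [reflexivity | rewrite IH; ring]. Qed.

Lemma binom_diag m : binom m m = 1.
Proof. induction m as [|m IH]; simpl; [reflexivity | rewrite IH, binom_gt by lia; ring]. Qed.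

(* Pascal's rule, in the form that one differentiation step of Leibniz's formula needs. *)
Lemma sum_binom_succ (a b : nat -> R) m :
  sum_f_R0 (fun j => binom m j * (a (S j) * b (m - j)%nat + a j * b (S (m - j)))) m =
  sum_f_R0 (fun j => binom (S m) j * (a j * b (S m - j)%nat)) (S m).
Proof.
  rewrite (sum_eq (fun j => binom (S m) j * (a j * b (S m - j)%nat))
    (fun j => binom m j * (a j * b (S m - j)%nat)
              + (match j with O => 0 | S j' => binom m j' end) * (a j * b (S m - j)%nat)))
    by (intros; simpl binom; ring).
  rewrite sum_plus, tech5, binom_gt, (decomp_sum _ (S m)) by lia. simpl pred.
  rewrite (sum_eq (fun j => binom m j * (a (S j) * b (m - j)%nat + a j * b (S (m - j))))
    (fun j => binom m j * (a (S j) * b (m - j)%nat) + binom m j * (a j * b (S m - j)%nat))).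
  - rewrite sum_plus, !Rmult_0_l, Rplus_0_r, Rplus_0_l, Rplus_comm. reflexivity.
  - intros j Hj. replace (S m - j)%nat with (S (m - j)) by lia. ring.
Qed.

Section Leibniz.

Variables F G : R -> R.
Hypothesis F_smooth : smooth_pos F.
Hypothesis G_smooth : smooth_pos G.

Definition leibniz_sum (m : nat) (x : R) : R :=
  sum_f_R0 (fun j => binom m j * (Derive_n F j x * Derive_n G (m - j) x)) m.

Lemma is_derive_leibniz_sum m x : 0 < x -> is_derive (leibniz_sum m) x (leibniz_sum (S m) x).
Proof.
  intros Hx. unfold leibniz_sum.
  rewrite <- (sum_binom_succ (fun j => Derive_n F j x) (fun j => Derive_n G j x)).
  apply (is_derive_sum_f_R0 (fun j y => binom m j * (Derive_n F j y * Derive_n G (m - j) y))).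
  intros j _. apply is_derive_scal.
  apply is_derive_Rmult; apply Derive_correct; [apply F_smooth | apply G_smooth]; exact Hx.
Qed.

Lemma Derive_n_mult_pos m x : 0 < x ->
  Derive_n (fun y => F y * G y) m x = leibniz_sum m x.
Proof.
  revert x; induction m as [|m IH]; intros x Hx.
  - unfold leibniz_sum. simpl. ring.
  - simpl Derive_n. rewrite (Derive_ext_loc _ (leibniz_sum m)).
    + apply is_derive_unique, is_derive_leibniz_sum, Hx.
    + apply (filter_imp (fun y => 0 < y)); [apply IH | apply locally_pos, Hx].
Qed.

Lemma smooth_pos_mult : smooth_pos (fun y => F y * G y).
Proof.
  intros j x Hx. apply (ex_derive_ext_loc (leibniz_sum j)).
  - apply (filter_imp (fun y => 0 < y)); [| apply locally_pos, Hx].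
    intros y Hy. symmetry. apply Derive_n_mult_pos, Hy.
  - eexists. apply is_derive_leibniz_sum, Hx.
Qed.

Lemma trace0_is_Derive_n_mult (a b : nat -> R) m :
  (forall j, trace0_is (Derive_n F j) (a j)) -> (forall j, trace0_is (Derive_n G j) (b j)) ->
  trace0_is (Derive_n (fun y => F y * G y) m) (sum_f_R0 (fun j => binom m j * (a j * b (m - j)%nat)) m).
Proof.
  intros Ha Hb. apply (trace0_is_ext (leibniz_sum m)).
  - intros s Hs. symmetry. apply Derive_n_mult_pos, Hs.
  - apply (lim_sum (fun j x => binom m j * (Derive_n F j x * Derive_n G (m - j) x))).
    intros j _. apply lim_mult; [apply lim_const | apply lim_mult; [apply Ha | apply Hb]].
Qed.

End Leibniz.

Lemma cont_on_closedQ_eps T g a b : cont_on_closedQ T g -> closedQ T (a, b) ->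
  forall eps, 0 < eps -> exists d, 0 < d /\ forall x y, closedQ T (x, y) ->
    Rabs (x - a) < d -> Rabs (y - b) < d -> Rabs (g x y - g a b) < eps.
Proof.
  intros Hg Hab eps He. destruct (proj1 (filterlim_locally _ _) (Hg (a, b) Hab) (mkposreal eps He)) as [d Hd].
  exists d. split; [apply cond_pos |]. intros x y Hxy Hx Hy. apply (Hd (x, y)); [split |]; assumption.
Qed.

Lemma cont_on_closedQ_plus T g h : cont_on_closedQ T g -> cont_on_closedQ T h ->
  cont_on_closedQ T (fun x y => g x y + h x y).
Proof. intros Hg Hh p Hp. exact (lim_plus _ _ _ _ (Hg p Hp) (Hh p Hp)). Qed.

Lemma cont_on_closedQ_mult T g h : cont_on_closedQ T g -> cont_on_closedQ T h ->
  cont_on_closedQ T (fun x y => g x y * h x y).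
Proof. intros Hg Hh p Hp. exact (lim_mult _ _ _ _ (Hg p Hp) (Hh p Hp)). Qed.

Lemma cont_on_closedQ_comp {U} (F : (U -> Prop) -> Prop) {FF : Filter F} T g (x y : U -> R) a b :
  cont_on_closedQ T g -> closedQ T (a, b) ->
  filterlim x F (locally a) -> filterlim y F (locally b) -> F (fun z => closedQ T (x z, y z)) ->
  filterlim (fun z => g (x z) (y z)) F (locally (g a b)).
Proof.
  intros Hg Hab Hx Hy HQ.
  apply (filterlim_comp _ _ _ (fun z => (x z, y z)) (fun q => g (fst q) (snd q)) F
    (within (closedQ T) (locally (a, b)))); [| exact (Hg (a, b) Hab)].
  intros P [eps HP]. unfold filtermap.
  apply (filter_imp (fun z => closedQ T (x z, y z) /\ ball a eps (x z) /\ ball b eps (y z))).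
  - intros z (Hz & Hxz & Hyz). apply HP; [split |]; assumption.
  - apply filter_and; [exact HQ | apply filter_and; [apply Hx, locally_ball | apply Hy, locally_ball]].
Qed.

Lemma cont_on_closedQ_trace T g t : cont_on_closedQ T g -> 0 <= t <= T ->
  trace0_is (fun s => g s t) (g 0 t).
Proof.
  intros Hg Ht. apply (cont_on_closedQ_comp _ T g (fun s => s) (fun _ => t)); auto.
  - split; simpl; lra.
  - apply (filterlim_filter_le_1 _ (filter_le_within (F := locally _) _)), filterlim_id.
  - apply lim_const.
  - apply (filter_imp (fun s => 0 < s < 1)); [intros s Hs; split; simpl; lra | apply at_right_0_interval; lra].
Qed.

Lemma cont_on_closedQ_at_left T g s : 0 < T -> cont_on_closedQ T g -> 0 <= s ->
  filterlim (fun t => g s t) (at_left T) (locally (g s T)).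
Proof.
  intros HT Hg Hs. apply (cont_on_closedQ_comp _ T g (fun _ => s) (fun t => t)); auto.
  - split; simpl; lra.
  - apply lim_const.
  - apply (filterlim_filter_le_1 _ (filter_le_within (F := locally _) _)), filterlim_id.
  - apply (filter_imp (fun t => 0 < t < T /\ T - 1 < t)); [intros t Ht; split; simpl; lra |].
    apply at_left_interval; lra.
Qed.

Lemma cont_on_closedQ_at_right T g s : 0 < T -> cont_on_closedQ T g -> 0 <= s ->
  filterlim (fun t => g s t) (at_right 0) (locally (g s 0)).
Proof.
  intros HT Hg Hs. apply (cont_on_closedQ_comp _ T g (fun _ => s) (fun t => t)); auto.
  - split; simpl; lra.
  - apply lim_const.
  - apply (filterlim_filter_le_1 _ (filter_le_within (F := locally _) _)), filterlim_id.
  - apply (filter_imp (fun t => 0 < t < T)); [intros t Ht; split; simpl; lra | apply at_right_0_interval, HT].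
Qed.

Lemma cont_on_closedQ_const_in_time T g s c : 0 < T -> cont_on_closedQ T g -> 0 <= s ->
  (forall t, 0 < t < T -> g s t = c) -> g s 0 = c /\ g s T = c.
Proof.
  intros HT Hg Hs Hc. split.
  - apply (lim_unique_ext _ _ _ _ _ (cont_on_closedQ_at_right T g s HT Hg Hs) (lim_const c)).
    apply (filter_imp (fun t => 0 < t < T)); [apply Hc | apply at_right_0_interval, HT].
  - apply (lim_unique_ext _ _ _ _ _ (cont_on_closedQ_at_left T g s HT Hg Hs) (lim_const c)).
    apply (filter_imp (fun t => 0 < t < T /\ T - 1 < t)); [intros t Ht; apply Hc, Ht |].
    apply at_left_interval; lra.
Qed.

Lemma dsn_Derive_n j (h : R -> R -> R) x t : dsn j h x t = Derive_n (fun y => h y t) j x.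
Proof.
  revert x; induction j as [|j IH]; intros x; [reflexivity |].
  apply Derive_ext, IH.
Qed.

Definition smooth_interior (T : R) (f : R -> R -> R) : Prop :=
  forall j k s t, openQ T (s, t) ->
    ex_derive (fun x => dsn j (dtn k f) x t) s /\
    ex_derive (fun y => dtn k f s y) t /\
    filterlim (fun q : R * R => dsn j (dtn k f) (fst q) (snd q)) (locally (s, t))
      (locally (dsn j (dtn k f) s t)).

Definition continuous_extension (T : R) (f : R -> R -> R) (g : nat -> nat -> R -> R -> R) : Prop :=
  forall j k, cont_on_closedQ T (g j k) /\
    forall s t, openQ T (s, t) -> g j k s t = dsn j (dtn k f) s t.

Section Component.

Context {T : R} {f : R -> R -> R} {g : nat -> nat -> R -> R -> R}.
Hypothesis T_pos : 0 < T.
Hypothesis f_cont : cont_on_closedQ T f.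
Hypothesis f_smooth : smooth_interior T f.
Hypothesis g_ext : continuous_extension T f g.

Lemma continuous_in_time j k s t : openQ T (s, t) -> continuous (fun y => dsn j (dtn k f) s y) t.
Proof.
  intros Hst. apply (filterlim_comp _ _ _ (fun y => (s, y)) (fun q => dsn j (dtn k f) (fst q) (snd q))
    _ (locally (s, t))); [| apply f_smooth, Hst].
  intros P [eps HP]. exists eps. intros y Hy. apply HP. split; [apply ball_center | exact Hy].
Qed.

Lemma ex_RInt_in_time j k s t1 t2 : 0 < s -> 0 < t1 < T -> 0 < t2 < T ->
  ex_RInt (fun y => dsn j (dtn k f) s y) t1 t2.
Proof.
  intros Hs Ht1 Ht2. apply (@ex_RInt_continuous R_CompleteNormedModule). intros z Hz.
  apply continuous_in_time. split; [exact Hs | apply (between_interval _ _ _ _ _ Ht1 Ht2 Hz)].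
Qed.

(* Only [d_s^j d_t f] is known to exist, so [d_t d_s^j f] is reached through the
   integral representation, differentiating under the integral sign in [s]. *)
Lemma dsn_time_increment j s t1 t2 : 0 < s -> 0 < t1 < T -> 0 < t2 < T ->
  dsn j f s t2 - dsn j f s t1 = RInt (fun y => dsn j (dtn 1 f) s y) t1 t2.
Proof.
  intros Hs Ht1 Ht2. pose proof (fun z => between_interval 0 T t1 t2 z Ht1 Ht2) as Hb.
  revert s Hs; induction j as [|j IH]; intros s Hs.
  - symmetry. apply (RInt_Derive (fun y => f s y)).
    + intros z Hz. apply (f_smooth 0%nat 0%nat s z). split; [exact Hs | apply Hb, Hz].
    + intros z Hz. apply (continuous_in_time 0%nat 1%nat s z). split; [exact Hs | apply Hb, Hz].
  - change (Derive (fun x => dsn j f x t2) s - Derive (fun x => dsn j f x t1) s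
      = RInt (fun y => Derive (fun x => dsn j (dtn 1 f) x y) s) t1 t2).
    rewrite <- Derive_minus by (apply (f_smooth j 0%nat s); split; simpl; lra).
    rewrite (Derive_ext_loc _ (fun x => RInt (fun y => dsn j (dtn 1 f) x y) t1 t2)).
    + apply is_derive_unique, (is_derive_RInt_param (fun x y => dsn j (dtn 1 f) x y)).
      * apply (filter_imp (fun x => 0 < x)); [| apply locally_pos, Hs].
        intros x Hx y Hy. apply (f_smooth j 1%nat x y). split; [exact Hx | apply Hb, Hy].
      * intros y Hy. apply continuity_2d_pt_filterlim, (f_smooth (S j) 1%nat s y).
        split; [exact Hs | apply Hb, Hy].
      * apply (filter_imp (fun x => 0 < x)); [| apply locally_pos, Hs].
        intros x Hx. apply ex_RInt_in_time; assumption.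
    + apply (filter_imp (fun x => 0 < x)); [apply IH | apply locally_pos, Hs].
Qed.

Lemma is_derive_time_dsn j s t : openQ T (s, t) ->
  is_derive (fun y => dsn j f s y) t (dsn j (dtn 1 f) s t).
Proof.
  intros [Hs Ht]; simpl in Hs, Ht.
  assert (H : is_derive (fun y => dsn j f s y - dsn j f s t) t (dsn j (dtn 1 f) s t)).
  { apply (is_derive_RInt (fun y => dsn j (dtn 1 f) s y) _ t t).
    - apply (filter_imp (fun y => 0 < y < T)); [| apply locally_interval, Ht].
      intros y Hy. rewrite dsn_time_increment by assumption.
      apply (@RInt_correct R_CompleteNormedModule), ex_RInt_in_time; assumption.
    - apply continuous_in_time. split; assumption. }
  pose proof (is_derive_plus _ _ _ _ _ H (is_derive_const (dsn j f s t) t)) as H'.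
  rewrite plus_zero_r in H'.
  apply (is_derive_ext (fun y => plus (dsn j f s y - dsn j f s t) (dsn j f s t))); [| exact H'].
  intros y. unfold plus; simpl. ring.
Qed.

Lemma is_derive_time_ext j s t : openQ T (s, t) ->
  is_derive (fun y => g j 0%nat s y) t (g j 1%nat s t).
Proof.
  intros Hst. rewrite (proj2 (g_ext j 1%nat) s t Hst).
  apply (is_derive_ext_loc (fun y => dsn j f s y)); [| apply is_derive_time_dsn, Hst].
  destruct Hst as [Hs Ht]. apply (filter_imp (fun y => 0 < y < T)); [| apply locally_interval, Ht].
  intros y Hy. symmetry. apply g_ext. split; assumption.
Qed.

Lemma is_derive_space_ext j s t : openQ T (s, t) ->
  is_derive (fun x => g j 0%nat x t) s (g (S j) 0%nat s t).
Proof.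
  intros Hst. rewrite (proj2 (g_ext (S j) 0%nat) s t Hst).
  change (dsn (S j) (dtn 0 f) s t) with (Derive (fun x => dsn j f x t) s).
  apply (is_derive_ext_loc (fun x => dsn j f x t)); [| apply Derive_correct, (f_smooth j 0%nat s t Hst)].
  destruct Hst as [Hs Ht]. apply (filter_imp (fun x => 0 < x)); [| apply locally_pos, Hs].
  intros x Hx. symmetry. apply g_ext. split; assumption.
Qed.

Lemma is_derive_trace_time j t : 0 < t < T -> is_derive (fun y => g j 0%nat 0 y) t (g j 1%nat 0 t).
Proof.
  intros Ht. set (r := Rmin t (T - t)).
  assert (Hr : 0 < r) by (apply Rmin_pos; lra).
  assert (Hru : forall u, Rabs (u - t) < r -> 0 < u < T).
  { intros u Hu. apply Rabs_def2 in Hu. pose proof (Rmin_l t (T - t)). pose proof (Rmin_r t (T - t)).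
    fold r in H, H0. lra. }
  apply (is_derive_limit (at_right 0) (fun u y => g j 0%nat y u) (fun u y => g j 1%nat y u) t 0 r Hr).
  - intros u Hu. apply (cont_on_closedQ_trace T (g j 0%nat)); [apply g_ext | pose proof (Hru u Hu); lra].
  - apply (filter_imp (fun y => 0 < y < 1)); [| apply at_right_0_interval; lra].
    intros y Hy u Hu. apply is_derive_time_ext. split; [apply Hy | apply Hru, Hu].
  - intros eps Heps.
    destruct (cont_on_closedQ_eps T (g j 1%nat) 0 t (proj1 (g_ext j 1%nat))) with (eps := eps)
      as [d [Hd Hg]]; [split; simpl; lra | exact Heps |].
    exists (Rmin d r). split; [apply Rmin_pos; lra |].
    apply (filter_imp (fun y => 0 < y < d)); [| apply at_right_0_interval, Hd].
    intros y Hy u Hu. pose proof (Rmin_l d r). pose proof (Rmin_r d r).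
    pose proof (Hru u (Rlt_le_trans _ _ _ Hu (Rmin_r d r))).
    apply Hg; [split; simpl; lra | apply Rabs_def1; lra | lra].
Qed.

Lemma dsn_top_edge j s : 0 < s -> dsn j f s T = g j 0%nat s T.
Proof.
  revert s; induction j as [|j IH]; intros s Hs.
  - apply (lim_unique_ext (at_left T) (fun t => f s t) (fun t => g 0%nat 0%nat s t));
      [apply cont_on_closedQ_at_left; auto; lra | apply cont_on_closedQ_at_left; [auto | apply g_ext | lra] |].
    apply (filter_imp (fun t => 0 < t < T /\ T - 1 < t)); [| apply at_left_interval; lra].
    intros t [Ht _]. symmetry. apply g_ext. split; assumption.
  - change (Derive (fun x => dsn j f x T) s = g (S j) 0%nat s T).
    rewrite (Derive_ext_loc _ (fun x => g j 0%nat x T));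
      [| apply (filter_imp (fun x => 0 < x)); [apply IH | apply locally_pos, Hs]].
    apply is_derive_unique.
    apply (is_derive_limit (at_left T) (fun u y => g j 0%nat u y) (fun u y => g (S j) 0%nat u y) s T s Hs).
    + intros u Hu. apply Rabs_def2 in Hu. apply cont_on_closedQ_at_left; [auto | apply g_ext | lra].
    + apply (filter_imp (fun y => 0 < y < T /\ T - 1 < y)); [| apply at_left_interval; lra].
      intros y [Hy _] u Hu. apply Rabs_def2 in Hu. apply is_derive_space_ext. split; simpl; lra.
    + intros eps Heps.
      destruct (cont_on_closedQ_eps T (g (S j) 0%nat) s T (proj1 (g_ext (S j) 0%nat))) with (eps := eps)
        as [d [Hd Hg]]; [split; simpl; lra | exact Heps |].
      exists (Rmin d s). split; [apply Rmin_pos; lra |].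
      apply (filter_imp (fun y => 0 < y < T /\ T - d < y)); [| apply at_left_interval; lra].
      intros y Hy u Hu. pose proof (Rmin_l d s). pose proof (Rmin_r d s). apply Rabs_def2 in Hu.
      apply Hg; [split; simpl; lra | apply Rabs_def1; lra | apply Rabs_def1; lra].
Qed.

Lemma dsn_ext j s t : 0 < s -> 0 < t <= T -> dsn j f s t = g j 0%nat s t.
Proof.
  intros Hs Ht. destruct (Req_dec t T) as [-> | HtT]; [apply dsn_top_edge, Hs |].
  symmetry. apply g_ext. split; simpl; lra.
Qed.

Lemma trace_dsn j t : 0 < t <= T -> trace0_is (fun s => dsn j f s t) (g j 0%nat 0 t).
Proof.
  intros Ht. apply (trace0_is_ext (fun s => g j 0%nat s t)).
  - intros s Hs. symmetry. apply dsn_ext; assumption.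
  - apply (cont_on_closedQ_trace T); [apply g_ext | lra].
Qed.

Lemma extension_eq_boundary t : 0 < t <= T -> g 0%nat 0%nat 0 t = f 0 t.
Proof.
  intros Ht. apply (trace0_is_unique (fun s => f s t)); [apply (trace_dsn 0%nat), Ht |].
  apply (cont_on_closedQ_trace T); [exact f_cont | lra].
Qed.

Lemma smooth_pos_slice t : 0 < t < T -> smooth_pos (fun x => f x t).
Proof.
  intros Ht j x Hx. apply (ex_derive_ext (fun y => dsn j f y t)); [intros; apply dsn_Derive_n |].
  apply (f_smooth j 0%nat x t). split; assumption.
Qed.

Lemma trace_Derive_n_slice j t : 0 < t < T -> trace0_is (Derive_n (fun x => f x t) j) (g j 0%nat 0 t).
Proof.
  intros Ht. apply (trace0_is_ext (fun s => dsn j f s t)); [intros; apply dsn_Derive_n |].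
  apply trace_dsn. lra.
Qed.

End Component.

Lemma smooth_up_to_boundary_extension T v : smooth_up_to_boundary T v ->
  exists G : nat -> nat -> nat -> R -> R -> R,
    forall i, (i < 3)%nat -> continuous_extension T (vfc i v) (G i).
Proof.
  intros [_ [_ Hext]].
  assert (Hex : forall i j k, exists g : R -> R -> R, (i < 3)%nat ->
    cont_on_closedQ T g /\ forall s t, openQ T (s, t) -> g s t = dsn j (dtn k (vfc i v)) s t).
  { intros i j k. destruct (Nat.lt_ge_cases i 3) as [Hi | Hi].
    - destruct (Hext i j k Hi) as [g Hg]. exists g. intros _. exact Hg.
    - exists (fun _ _ => 0). intros; lia. }
  exists (fun i j k => proj1_sig (constructive_indefinite_description _ (Hex i j k))).
  intros i Hi j k. exact (proj2_sig (constructive_indefinite_description _ (Hex i j k)) Hi).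
Qed.

Section Jets.

Context {T : R} {v : R -> R -> vec} {v0 : R -> vec} {G : nat -> nat -> nat -> R -> R -> R}.
Hypothesis T_pos : 0 < T.
Hypothesis v_smooth : smooth_up_to_boundary T v.
Hypothesis G_ext : forall i, (i < 3)%nat -> continuous_extension T (vfc i v) (G i).
Hypothesis v_eq : forall s t, openQ T (s, t) -> forall i, (i < 3)%nat ->
  dt (vfc i v) s t = vcomp i (cross (v s t) (Dsn 2 v s t)).
Hypothesis v_init : forall s, 0 < s -> v s 0 = v0 s.
Hypothesis v_bdry : forall t, 0 < t <= T -> v 0 t = e3.
Hypothesis v0_unit : forall s, 0 <= s -> vnorm (v0 s) = 1.

Lemma component_cont i : (i < 3)%nat -> cont_on_closedQ T (vfc i v).
Proof. intros Hi. apply v_smooth, Hi. Qed.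

Lemma component_smooth i : (i < 3)%nat -> smooth_interior T (vfc i v).
Proof. intros Hi j k s t. apply (proj1 (proj2 v_smooth)), Hi. Qed.

(* a_m(t): the value at s = 0 of the continuous extension of d_s^m v. *)
Definition jet (m : nat) (t : R) : vec := (G 0%nat m 0%nat 0 t, G 1%nat m 0%nat 0 t, G 2%nat m 0%nat 0 t).

Lemma vcomp_jet p m t : (p < 3)%nat -> vcomp p (jet m t) = G p m 0%nat 0 t.
Proof. intros Hp. destruct p as [|[|[|p]]]; [reflexivity | reflexivity | reflexivity | lia]. Qed.

Lemma jet_trace m t : 0 < t <= T -> vtrace0_is (fun s => Dsn m v s t) (jet m t).
Proof.
  intros Ht p Hp. rewrite vcomp_jet by exact Hp.
  apply (trace0_is_ext (fun s => dsn m (vfc p v) s t)); [intros; symmetry; apply vcomp_Dsn, Hp |].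
  exact (trace_dsn T_pos (component_cont p Hp) (component_smooth p Hp) (G_ext p Hp) m t Ht).
Qed.

Lemma jet_0 t : 0 < t <= T -> jet 0 t = e3.
Proof.
  intros Ht.
  assert (E : forall i, (i < 3)%nat -> G i 0%nat 0%nat 0 t = vcomp i e3).
  { intros i Hi. rewrite (extension_eq_boundary T_pos (component_cont i Hi) (component_smooth i Hi) (G_ext i Hi) t Ht).
    unfold vfc. rewrite v_bdry by exact Ht. reflexivity. }
  unfold jet. rewrite !E by lia. reflexivity.
Qed.

Lemma trace_Derive_n_component i j t : (i < 3)%nat -> 0 < t < T ->
  trace0_is (Derive_n (fun x => vfc i v x t) j) (vcomp i (jet j t)).
Proof.
  intros Hi Ht. rewrite vcomp_jet by exact Hi.
  exact (trace_Derive_n_slice T_pos (component_cont i Hi) (component_smooth i Hi) (G_ext i Hi) j t Ht).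
Qed.

Lemma smooth_pos_component i t : (i < 3)%nat -> 0 < t < T -> smooth_pos (fun x => vfc i v x t).
Proof. intros Hi. exact (smooth_pos_slice (component_smooth i Hi) t). Qed.

Lemma norm_one_interior s t : openQ T (s, t) -> dot (v s t) (v s t) = 1.
Proof.
  intros [Hs Ht]; simpl in Hs, Ht.
  set (Phi := fun x y => vfc 0 v x y * vfc 0 v x y + vfc 1 v x y * vfc 1 v x y + vfc 2 v x y * vfc 2 v x y).
  assert (HPhi : forall x y, dot (v x y) (v x y) = Phi x y) by (intros; apply dot_vcomp).
  assert (Hconst : forall y, 0 < y < T -> Phi s y = Phi s t).
  { intros y Hy. rewrite <- !HPhi. apply (is_derive_zero_const (fun z => dot (v s z) (v s z)) 0 T); auto.
    intros z Hz. replace 0 with (2 * dot (v s z) (cross (v s z) (Dsn 2 v s z))) by (rewrite dot_cross_l; ring).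
    assert (Hsz : openQ T (s, z)) by (split; simpl; lra).
    apply is_derive_dot_self. intros p Hp. rewrite <- (v_eq s z Hsz p Hp).
    apply Derive_correct, (component_smooth p Hp 0%nat 0%nat s z Hsz). }
  assert (Hcont : cont_on_closedQ T Phi)
    by (repeat apply cont_on_closedQ_plus; apply cont_on_closedQ_mult; apply component_cont; lia).
  destruct (cont_on_closedQ_const_in_time T Phi s (Phi s t) T_pos Hcont) as [H0 _]; [lra | exact Hconst |].
  rewrite HPhi, <- H0, <- HPhi, v_init by exact Hs. apply dot_self_of_vnorm, v0_unit. lra.
Qed.

Lemma jet_dot_sum m t : (1 <= m)%nat -> 0 < t < T ->
  sum_f_R0 (fun j => binom m j * dot (jet j t) (jet (m - j) t)) m = 0.
Proof.
  intros Hm Ht. set (F := fun p x => vfc p v x t).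
  assert (HF : forall p, (p < 3)%nat -> smooth_pos (F p)) by (intros; apply smooth_pos_component; auto).
  assert (Htr : forall p, (p < 3)%nat -> trace0_is (Derive_n (fun x => F p x * F p x) m)
    (sum_f_R0 (fun j => binom m j * (vcomp p (jet j t) * vcomp p (jet (m - j) t))) m)).
  { intros p Hp. apply (trace0_is_Derive_n_mult (F p) (F p) (HF p Hp) (HF p Hp)
      (fun j => vcomp p (jet j t)) (fun j => vcomp p (jet j t)));
      intros j; apply trace_Derive_n_component; assumption. }
  assert (Hzero : forall x, 0 < x -> Derive_n (fun x => F 0%nat x * F 0%nat x) m x
      + Derive_n (fun x => F 1%nat x * F 1%nat x) m x + Derive_n (fun x => F 2%nat x * F 2%nat x) m x = 0).
  { intros x Hx.
    assert (HS : forall p, (p < 3)%nat -> smooth_pos (fun y => F p y * F p y))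
      by (intros p Hp; apply smooth_pos_mult; apply HF, Hp).
    rewrite <- (Derive_n_plus_pos _ _ m x (HS 0%nat ltac:(lia)) (HS 1%nat ltac:(lia)) Hx).
    rewrite <- (Derive_n_plus_pos _ _ m x
      (smooth_pos_plus _ _ (HS 0%nat ltac:(lia)) (HS 1%nat ltac:(lia))) (HS 2%nat ltac:(lia)) Hx).
    destruct m as [|m]; [lia |]. rewrite (Derive_n_ext_loc _ (fun _ => 1)); [apply Derive_n_const |].
    apply (filter_imp (fun y => 0 < y)); [| apply locally_pos, Hx]. intros y Hy.
    rewrite <- (norm_one_interior y t) by (split; simpl; lra). symmetry. apply dot_vcomp. }
  apply (trace0_is_unique (fun x => Derive_n (fun x => F 0%nat x * F 0%nat x) m x
      + Derive_n (fun x => F 1%nat x * F 1%nat x) m x + Derive_n (fun x => F 2%nat x * F 2%nat x) m x)).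
  - replace (sum_f_R0 (fun j => binom m j * dot (jet j t) (jet (m - j) t)) m)
      with (sum_f_R0 (fun j => binom m j * (vcomp 0 (jet j t) * vcomp 0 (jet (m - j) t))) m
          + sum_f_R0 (fun j => binom m j * (vcomp 1 (jet j t) * vcomp 1 (jet (m - j) t))) m
          + sum_f_R0 (fun j => binom m j * (vcomp 2 (jet j t) * vcomp 2 (jet (m - j) t))) m)
      by (rewrite <- !sum_plus; apply sum_eq; intros; rewrite dot_vcomp; ring).
    apply lim_plus; [apply lim_plus |]; apply Htr; lia.
  - apply (trace0_is_ext (fun _ => 0)); [intros; symmetry; apply Hzero; assumption | apply lim_const].
Qed.

Lemma jet_time_derivative i m t : (i < 3)%nat -> 0 < t < T ->
  G i m 1%nat 0 t = sum_f_R0 (fun j => binom m j * vcomp i (cross (jet j t) (jet (m - j + 2) t))) m.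
Proof.
  intros Hi Ht. destruct (vcomp_cross i Hi) as [p [q [Hp [Hq Hc]]]].
  set (Fp := fun x => vfc p v x t). set (Fq := fun x => vfc q v x t).
  assert (Sp : smooth_pos Fp) by (apply smooth_pos_component; assumption).
  assert (Sq : smooth_pos Fq) by (apply smooth_pos_component; assumption).
  assert (Htr : forall F r, (r < 3)%nat -> F = (fun x => vfc r v x t) ->
    forall j, trace0_is (Derive_n (Derive_n F 2) j) (vcomp r (jet (j + 2) t))).
  { intros F r Hr -> j. apply (trace0_is_ext (Derive_n (fun x => vfc r v x t) (j + 2)));
      [intros; symmetry; apply Derive_n_comp | apply trace_Derive_n_component; assumption]. }
  apply (trace0_is_unique (fun x => G i m 1%nat x t)).
  - apply (cont_on_closedQ_trace T); [apply G_ext, Hi | lra].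
  - apply (trace0_is_ext (fun x => Derive_n (fun y => Fp y * Derive_n Fq 2 y) m x
      - Derive_n (fun y => Fq y * Derive_n Fp 2 y) m x)).
    + intros x Hx. rewrite (proj2 (G_ext i Hi m 1%nat) x t) by (split; simpl; lra).
      rewrite <- Derive_n_minus_pos by (try apply smooth_pos_mult; auto using smooth_pos_Derive_n).
      rewrite dsn_Derive_n. apply Derive_n_ext_loc.
      apply (filter_imp (fun y => 0 < y)); [| apply locally_pos, Hx]. intros y Hy.
      change (Fp y * Derive_n Fq 2 y - Fq y * Derive_n Fp 2 y = dt (vfc i v) y t).
      rewrite v_eq, Hc; [| split; simpl; lra | exact Hi].
      unfold Fp, Fq. rewrite !vcomp_Dsn, <- !dsn_Derive_n by assumption. reflexivity.
    + replace (sum_f_R0 (fun j => binom m j * vcomp i (cross (jet j t) (jet (m - j + 2) t))) m)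
        with (sum_f_R0 (fun j => binom m j * (vcomp p (jet j t) * vcomp q (jet (m - j + 2) t))) m
            - sum_f_R0 (fun j => binom m j * (vcomp q (jet j t) * vcomp p (jet (m - j + 2) t))) m)
        by (rewrite <- minus_sum; apply sum_eq; intros; rewrite Hc; ring).
      apply lim_minus.
      * apply (trace0_is_Derive_n_mult Fp _ Sp (smooth_pos_Derive_n Fq 2 Sq)
          (fun j => vcomp p (jet j t)) (fun j => vcomp q (jet (j + 2) t)));
          intros j; [apply trace_Derive_n_component | apply Htr]; auto.
      * apply (trace0_is_Derive_n_mult Fq _ Sq (smooth_pos_Derive_n Fp 2 Sp)
          (fun j => vcomp q (jet j t)) (fun j => vcomp p (jet (j + 2) t)));
          intros j; [apply trace_Derive_n_component | apply Htr]; auto.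
Qed.

Lemma is_derive_jet i m t : (i < 3)%nat -> 0 < t < T ->
  is_derive (fun y => G i m 0%nat 0 y) t (G i m 1%nat 0 t).
Proof. intros Hi. exact (is_derive_trace_time (component_smooth i Hi) (G_ext i Hi) m t). Qed.

Lemma jet_parity_odd m t : 0 < t < T -> Nat.even m = false ->
  (forall j, (j < m)%nat -> parity_vec j (jet j t)) -> vcomp 2 (jet m t) = 0.
Proof.
  intros Ht Hm IH. assert (Hm1 : (1 <= m)%nat) by (destruct m; [discriminate | lia]).
  pose proof (jet_dot_sum m t Hm1 Ht) as S.
  rewrite sum_f_R0_ends in S; [| lia |].
  - rewrite binom_0, binom_diag, Nat.sub_0_r, Nat.sub_diag, jet_0 in S by lra.
    destruct (jet m t) as [[a b] c]. simpl in *. lra.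
  - intros j Hj. rewrite (dot_parity_vec j (m - j)); [ring | apply IH; lia | apply IH; lia |].
    replace (j + (m - j))%nat with m by lia. exact Hm.
Qed.

Lemma jet_parity_even m t : 0 < t < T -> Nat.even m = true -> (2 <= m)%nat ->
  (forall j, (j < m)%nat -> forall t', 0 < t' < T -> parity_vec j (jet j t')) ->
  vcomp 0 (jet m t) = 0 /\ vcomp 1 (jet m t) = 0.
Proof.
  intros Ht Hm H2 IH. destruct m as [|[|m]]; [lia | lia |]. simpl in Hm.
  assert (Hdt : forall i, (i < 2)%nat -> G i m 1%nat 0 t = 0).
  { intros i Hi. rewrite <- (is_derive_unique _ _ _ (is_derive_jet i m t ltac:(lia) Ht)).
    rewrite (Derive_ext_loc _ (fun _ => 0)); [apply Derive_const |].
    apply (filter_imp (fun y => 0 < y < T)); [| apply locally_interval, Ht].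
    intros y Hy. pose proof (IH m ltac:(lia) y Hy) as P. unfold parity_vec in P. rewrite Hm in P.
    rewrite <- vcomp_jet by lia. destruct i as [|[|i]]; [apply P | apply P | lia]. }
  assert (Hh : forall i, (i < 2)%nat -> vcomp i (cross e3 (jet (S (S m)) t)) = 0).
  { intros i Hi. rewrite <- (Hdt i Hi), jet_time_derivative by (lia || exact Ht).
    rewrite sum_f_R0_first.
    - rewrite binom_0, Nat.sub_0_r, jet_0 by lra. replace (m + 2)%nat with (S (S m)) by lia. ring.
    - intros j Hj.
      destruct (cross_parity_vec j (m - j + 2) (jet j t) (jet (m - j + 2) t)) as [C0 C1];
        [apply IH; lia || exact Ht | apply IH; lia || exact Ht | |].
      + replace (j + (m - j + 2))%nat with (S (S m)) by lia. exact Hm.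
      + destruct i as [|[|i]]; [rewrite C0 | rewrite C1 | lia]; ring. }
  pose proof (Hh 0%nat ltac:(lia)) as H0. pose proof (Hh 1%nat ltac:(lia)) as H1.
  destruct (jet (S (S m)) t) as [[a b] c]. simpl in *. split; lra.
Qed.

Lemma jet_parity_interior m : forall t, 0 < t < T -> parity_vec m (jet m t).
Proof.
  induction m as [m IH] using lt_wf_ind. intros t Ht. unfold parity_vec at 1.
  destruct (Nat.even m) eqn:Hm.
  - destruct (Nat.lt_ge_cases m 2) as [Hlt | Hge].
    + destruct m as [|[|m]]; [| discriminate | lia].
      rewrite jet_0 by lra. split; reflexivity.
    + apply jet_parity_even; auto.
  - apply jet_parity_odd; auto.
Qed.

Lemma jet_parity m t : 0 < t <= T -> parity_vec m (jet m t).
Proof.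
  intros Ht. destruct (Req_dec t T) as [-> | HtT]; [| apply jet_parity_interior; lra].
  assert (Htop : forall i, (i < 3)%nat -> (forall t', 0 < t' < T -> vcomp i (jet m t') = 0) ->
    vcomp i (jet m T) = 0).
  { intros i Hi H. rewrite vcomp_jet by exact Hi.
    refine (proj2 (cont_on_closedQ_const_in_time T (G i m 0%nat) 0 0 T_pos (proj1 (G_ext i Hi m 0%nat))
      (Rle_refl 0) _)). intros t' Ht'. rewrite <- vcomp_jet by exact Hi. apply H, Ht'. }
  pose proof (jet_parity_interior m) as P. unfold parity_vec in *. destruct (Nat.even m).
  - split; apply Htop; try lia; intros t' Ht'; apply P, Ht'.
  - apply Htop; [lia |]. intros t' Ht'. apply P, Ht'.
Qed.

Lemma trace_cross_even n t : 0 < t <= T ->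
  vtrace0_is (fun s => cross (v s t) (Dsn (2 * n) v s t)) vzero.
Proof.
  intros Ht. pose proof (jet_parity (2 * n) t Ht) as P. unfold parity_vec in P.
  replace (Nat.even (2 * n)) with true in P by (rewrite Nat.even_mul; reflexivity).
  destruct P as [P0 P1].
  rewrite <- (cross_e3_horizontal _ P0 P1), <- (jet_0 t Ht).
  apply vtrace0_is_cross; [| apply jet_trace, Ht].
  intros p Hp. apply (trace0_is_ext (fun s => vcomp p (Dsn 0 v s t))); [intros; rewrite Dsn_0; reflexivity |].
  apply jet_trace; assumption.
Qed.

Lemma trace_dot_odd j l t : 0 < t <= T -> Nat.even (j + l) = false ->
  trace0_is (fun s => dot (Dsn j v s t) (Dsn l v s t)) 0.
Proof.
  intros Ht Hjl. rewrite <- (dot_parity_vec j l (jet j t) (jet l t)); try apply jet_parity; auto.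
  apply vtrace0_is_dot; apply jet_trace, Ht.
Qed.

End Jets.

Theorem lemma3p1 (T : R) (v : R -> R -> vec) (v0 : R -> vec) :
  0 < T ->
  smooth_up_to_boundary T v ->
  (forall s t, openQ T (s, t) ->
     forall i : nat, (i < 3)%nat ->
       dt (vfc i v) s t = vcomp i (cross (v s t) (Dsn 2 v s t))) ->
  (forall s, 0 < s -> v s 0 = v0 s) ->
  (forall t, 0 < t <= T -> v 0 t = e3) ->
  (forall s, 0 <= s -> vnorm (v0 s) = 1) ->
  forall n : nat, (1 <= n)%nat ->
  forall t, 0 < t <= T ->
    (forall i : nat, (i < 3)%nat ->
       trace0_is (fun s => vcomp i (cross (v s t) (Dsn (2 * n) v s t))) 0) /\
    (forall j l : nat, (j + l = 2 * n + 1)%nat ->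
       trace0_is (fun s => dot (Dsn j v s t) (Dsn l v s t)) 0).
Proof.
  intros HT Hsm Heq Hinit Hbd Hunit n _ t Ht.
  destruct (smooth_up_to_boundary_extension T v Hsm) as [G HG].
  split.
  - intros i Hi. rewrite <- (vcomp_vzero i).
    exact (trace_cross_even HT Hsm HG Heq Hinit Hbd Hunit n t Ht i Hi).
  - intros j l Hjl. apply (trace_dot_odd HT Hsm HG Heq Hinit Hbd Hunit j l t Ht).
    rewrite Hjl, Nat.even_add, Nat.even_mul. reflexivity.
Qed.
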